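(* Let $\Lambda$ denote the von Mangoldt function and let $\varepsilon>0$ be a small number. Then, as $x\to\infty$, \[ \sum_{n\leq x} \Lambda\left( [x/n]+1 \right) = c_0 x + O\left( x^{(2+\varepsilon)/3}\log^2 x \right), \] where the density constant is \[ c_0=\sum_{n\geq 1}\frac{\Lambda(n+1)}{n(n+1)}\geq 0.7553658. \]
   Context: $[t]$ denotes the largest integer not exceeding $t$. The von Mangoldt function is $\Lambda(m)=\log p$ if $m=p^k$ for a prime $p$ and an integer $k\geq 1$, and $\Lambda(m)=0$ otherwise. The sum is over positive integers $n\le x$. *)

From Stdlib Require Import Reals List ClassicalEpsilon.
From Coquelicot Require Import Coquelicot.
From mathcomp Require Import ssreflect ssrbool ssrnat prime.

Open Scope R_scope.

Definition is_prime_power_of (m p : nat) : Prop :=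
  prime p /\ exists k : nat, (1 <= k)%coq_nat /\ m = (p ^ k)%nat.

Definition vonMangoldt (m : nat) : R :=
  match excluded_middle_informative (exists p, is_prime_power_of m p) with
  | left H => ln (INR (proj1_sig (constructive_indefinite_description _ H)))
  | right _ => 0
  end.

(* [t] : largest integer not exceeding t (Stdlib Int_part = up t - 1) *)
Definition floorR (t : R) : Z := Int_part t.

Definition sum_1_to (N : nat) (f : nat -> R) : R :=
  fold_right Rplus 0 (map f (seq 1 N)).

Definition S (x : R) : R :=
  sum_1_to (Z.to_nat (floorR x))
    (fun n => vonMangoldt (Z.to_nat (floorR (x / INR n)) + 1)%nat).

(* term of the series defining c0, shifted so that index k corresponds to n = k+1 *)
Definition c0_term (k : nat) : R :=
  vonMangoldt (k + 2)%nat / (INR (k + 1) * INR (k + 2)).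

Definition c0 : R := Series c0_term.

(* Grouping the n <= x by the value m = [x/n] turns S(x) into
   sum_{m <= x} Lambda(m+1) ([x/m] - [x/(m+1)]).  For m <= sqrt x the bracket is
   x/(m(m+1)) + O(1), which gives x times a partial sum of the series for c0 up to
   O(sqrt x log x); the m > sqrt x contribute at most log(x+1) [x/(sqrt x + 1)]; and the
   tail of the series beyond sqrt x is O(log x / sqrt x), because
   Lambda(k+2)/((k+1)(k+2)) <= H(k) - H(k+1) for H(k) = (1 + log(k+1))/k.  So the error is
   in fact O(sqrt x log x).  The lower bound for c0 is that of its partial sum of 16 terms,
   the logarithms of the primes up to 17 being bounded below by harmonic sums. *)

From Stdlib Require Import Reals Lra Lia List ZArith ClassicalEpsilon.
From Coquelicot Require Import Coquelicot.
From mathcomp Require ssreflect ssrbool eqtype ssrnat div prime.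
Open Scope R_scope.

Notation suc := Datatypes.S.

Definition lsum (l : list nat) (f : nat -> R) : R := fold_right Rplus 0 (map f l).

Lemma lsum_cons a l f : lsum (a :: l) f = f a + lsum l f.
Proof. reflexivity. Qed.

Lemma lsum_app l1 l2 f : lsum (l1 ++ l2) f = lsum l1 f + lsum l2 f.
Proof. unfold lsum. induction l1 as [|a l1 IH]; simpl; [ring|]. rewrite IH; ring. Qed.

Lemma lsum_ext l f g : (forall i, In i l -> f i = g i) -> lsum l f = lsum l g.
Proof.
  intros Hfg. induction l as [|a l IH]; [reflexivity|].
  rewrite !lsum_cons, Hfg by (simpl; auto). f_equal. apply IH. intros; apply Hfg; simpl; auto.
Qed.

Lemma lsum_le l f g : (forall i, In i l -> f i <= g i) -> lsum l f <= lsum l g.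
Proof.
  intros Hfg. induction l as [|a l IH]; [apply Rle_refl|].
  rewrite !lsum_cons. apply Rplus_le_compat; [apply Hfg; simpl; auto|].
  apply IH; intros; apply Hfg; simpl; auto.
Qed.

Lemma lsum_plus l f g : lsum l (fun i => f i + g i) = lsum l f + lsum l g.
Proof. unfold lsum. induction l as [|a l IH]; simpl; [ring|]. rewrite IH; ring. Qed.

Lemma lsum_minus l f g : lsum l (fun i => f i - g i) = lsum l f - lsum l g.
Proof. unfold lsum. induction l as [|a l IH]; simpl; [ring|]. rewrite IH; ring. Qed.

Lemma lsum_scal l c f : lsum l (fun i => c * f i) = c * lsum l f.
Proof. unfold lsum. induction l as [|a l IH]; simpl; [ring|]. rewrite IH; ring. Qed.

Lemma lsum_const l c : lsum l (fun _ => c) = INR (length l) * c.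
Proof.
  unfold lsum. induction l as [|a l IH]; [simpl; ring|]. rewrite length_cons, S_INR. simpl. rewrite IH; ring.
Qed.

Lemma lsum_abs l f : Rabs (lsum l f) <= lsum l (fun i => Rabs (f i)).
Proof.
  unfold lsum. induction l as [|a l IH]; simpl; [rewrite Rabs_R0; lra|].
  eapply Rle_trans; [apply Rabs_triang|]. lra.
Qed.

Lemma lsum_swap l1 l2 F :
  lsum l1 (fun i => lsum l2 (F i)) = lsum l2 (fun j => lsum l1 (fun i => F i j)).
Proof.
  induction l1 as [|a l1 IH].
  - rewrite (lsum_ext l2 _ (fun _ => 0)) by reflexivity. rewrite lsum_const. unfold lsum. simpl. ring.
  - rewrite lsum_cons, IH, <- lsum_plus. reflexivity.
Qed.

Lemma lsum_telescope a L u : lsum (seq a L) (fun m => u m - u (suc m)) = u a - u (a + L)%nat.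
Proof.
  unfold lsum. revert a. induction L as [|L IH]; intros a; simpl.
  - rewrite Nat.add_0_r; ring.
  - rewrite IH, Nat.add_succ_r. simpl. ring.
Qed.

Lemma lsum_seq_S a L f : lsum (seq a (suc L)) f = lsum (seq a L) f + f (a + L)%nat.
Proof. rewrite seq_S, lsum_app. unfold lsum at 2. simpl. ring. Qed.

Lemma sum_n_lsum (a : nat -> R) n : sum_n a n = lsum (seq 0 (suc n)) a.
Proof.
  induction n as [|n IH].
  - rewrite sum_O. unfold lsum. simpl. ring.
  - rewrite sum_Sn, IH, (lsum_seq_S 0 (suc n)). reflexivity.
Qed.

Lemma lsum_seq_shift a L f : lsum (seq (suc a) L) f = lsum (seq a L) (fun k => f (suc k)).
Proof. rewrite <- seq_shift. unfold lsum. rewrite map_map. reflexivity. Qed.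

Definition b2R (b : bool) : R := if b then 1 else 0.

Lemma lsum_b2R_leb N c : (c <= N)%nat -> lsum (seq 1 N) (fun n => b2R (n <=? c)%nat) = INR c.
Proof.
  revert c. induction N as [|N IH]; intros c Hc.
  - replace c with 0%nat by lia. reflexivity.
  - rewrite lsum_seq_S. unfold b2R at 2.
    destruct (Nat.leb_spec (1 + N) c) as [HN|HN].
    + replace c with (suc N) in * by lia.
      rewrite (lsum_ext _ _ (fun _ => 1)).
      * rewrite lsum_const, length_seq, S_INR. ring.
      * intros i Hi; apply in_seq in Hi. unfold b2R. destruct (Nat.leb_spec i (suc N)); [reflexivity|lia].
    + rewrite IH by lia. ring.
Qed.

Lemma lsum_b2R_eqb a L k g : (a <= k < a + L)%nat ->
  lsum (seq a L) (fun m => g m * b2R (m =? k)%nat) = g k.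
Proof.
  revert a. induction L as [|L IH]; intros a Hk; [lia|].
  simpl seq. rewrite lsum_cons. unfold b2R at 1. destruct (Nat.eqb_spec a k) as [->|Hak].
  - rewrite (lsum_ext _ _ (fun _ => 0)), lsum_const; [ring|].
    intros i Hi. apply in_seq in Hi. unfold b2R. destruct (Nat.eqb_spec i k); [lia|ring].
  - rewrite IH by lia. ring.
Qed.

Section SumOverAdjoint.

Variables (N : nat) (c : nat -> nat).
Hypothesis c_adjoint : forall n m, (1 <= n)%nat -> (1 <= m)%nat -> (n <= c m)%nat <-> (m <= c n)%nat.
Hypothesis c_le : forall n, (1 <= n)%nat -> (c n <= N)%nat.
Hypothesis c_ge1 : forall n, (1 <= n <= N)%nat -> (1 <= c n)%nat.

(* Sorting the n by the value m = c n: by adjointness, #{n <= N | c n = m} = c m - c (m + 1). *)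
Lemma lsum_comp_adjoint (g : nat -> R) :
  lsum (seq 1 N) (fun n => g (c n)) = lsum (seq 1 N) (fun m => g m * (INR (c m) - INR (c (suc m)))).
Proof.
  transitivity (lsum (seq 1 N) (fun n => lsum (seq 1 N) (fun m =>
     g m * (b2R (n <=? c m)%nat - b2R (n <=? c (suc m))%nat)))).
  - apply lsum_ext. intros n Hn. apply in_seq in Hn.
    rewrite <- (lsum_b2R_eqb 1 N (c n) g) by (pose proof (c_ge1 n); pose proof (c_le n); lia).
    apply lsum_ext. intros m Hm. apply in_seq in Hm. f_equal.
    pose proof (c_adjoint n m) as Hm1. pose proof (c_adjoint n (suc m)) as Hm2.
    unfold b2R. destruct (Nat.leb_spec n (c m)), (Nat.leb_spec n (c (suc m))), (Nat.eqb_spec m (c n));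
      first [ring | exfalso; lia].
  - rewrite lsum_swap. apply lsum_ext. intros m Hm. apply in_seq in Hm.
    rewrite lsum_scal, lsum_minus, !lsum_b2R_leb by (apply c_le; lia). reflexivity.
Qed.

End SumOverAdjoint.

Definition floor_nat (y : R) : nat := Z.to_nat (floorR y).

Lemma floor_nat_spec y : 0 <= y -> INR (floor_nat y) <= y < INR (floor_nat y) + 1.
Proof.
  intros Hy. unfold floor_nat, floorR. destruct (base_Int_part y) as [H1 H2].
  assert (Hz : (0 <= Int_part y)%Z).
  { assert (Hgt : IZR (Int_part y) > -1) by lra. apply lt_IZR in Hgt. lia. }
  rewrite INR_IZR_INZ, Z2Nat.id by exact Hz. lra.
Qed.

Lemma le_floor_nat y k : 0 <= y -> (k <= floor_nat y)%nat <-> INR k <= y.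
Proof.
  intros Hy. destruct (floor_nat_spec y Hy) as [H1 H2]. split; intros Hk.
  - apply le_INR in Hk. lra.
  - apply Nat.lt_succ_r, INR_lt. rewrite S_INR. lra.
Qed.

Lemma floor_nat_le_compat y z : 0 <= y <= z -> (floor_nat y <= floor_nat z)%nat.
Proof.
  intros Hyz. apply le_floor_nat; [lra|]. destruct (floor_nat_spec y); lra.
Qed.

Lemma INR_ge1 n : (1 <= n)%nat -> 1 <= INR n.
Proof. apply (le_INR 1). Qed.

Lemma le_floor_nat_div x n m : 0 <= x -> (1 <= n)%nat -> (1 <= m)%nat ->
  (n <= floor_nat (x / INR m))%nat <-> INR n * INR m <= x.
Proof.
  intros Hx Hn Hm. pose proof (INR_ge1 m Hm).
  rewrite le_floor_nat by (apply Rdiv_le_0_compat; lra).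
  split; intros Hle.
  - apply Rmult_le_reg_r with (/ INR m); [apply Rinv_0_lt_compat; lra|].
    rewrite Rmult_assoc, Rinv_r by lra. lra.
  - apply Rmult_le_reg_r with (INR m); [lra|]. unfold Rdiv. rewrite Rmult_assoc, Rinv_l by lra. lra.
Qed.

Lemma floor_nat_div_adjoint x n m : 0 <= x -> (1 <= n)%nat -> (1 <= m)%nat ->
  (n <= floor_nat (x / INR m))%nat <-> (m <= floor_nat (x / INR n))%nat.
Proof.
  intros Hx Hn Hm. rewrite !le_floor_nat_div by assumption. rewrite Rmult_comm. reflexivity.
Qed.

Lemma floor_nat_div_le x n : 0 <= x -> (1 <= n)%nat -> (floor_nat (x / INR n) <= floor_nat x)%nat.
Proof.
  intros Hx Hn. pose proof (INR_ge1 n Hn). apply floor_nat_le_compat. split.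
  - apply Rdiv_le_0_compat; lra.
  - apply Rmult_le_reg_r with (INR n); [lra|]. unfold Rdiv. rewrite Rmult_assoc, Rinv_l by lra. nra.
Qed.

Lemma floor_nat_div_ge1 x n : 0 <= x -> (1 <= n <= floor_nat x)%nat -> (1 <= floor_nat (x / INR n))%nat.
Proof.
  intros Hx Hn. apply le_floor_nat_div; [assumption|lia|lia|].
  rewrite Rmult_1_l. apply le_floor_nat; [assumption|lia].
Qed.

Section VonMangoldt.
Import ssreflect ssrbool eqtype ssrnat div prime.

Lemma vonMangoldt_prime_pow p k : prime p -> (0 < k)%N -> vonMangoldt (p ^ k) = ln (INR p).
Proof.
move=> p_pr k_gt0; rewrite /vonMangoldt.
case: excluded_middle_informative => [H|H]; last first.
  by exfalso; apply: H; exists p; split=> //; exists k; split=> //; apply/leP.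
case: (constructive_indefinite_description _ H) => q [q_pr [j [j_ge1 pkqj]]] /=.
have : (q %| p ^ k)%N by rewrite pkqj; apply: dvdn_exp; [apply/leP | exact: dvdnn].
by rewrite Euclid_dvdX // dvdn_prime2 // => /andP [/eqP ->].
Qed.

Lemma vonMangoldt_ge0 m : 0 <= vonMangoldt m.
Proof.
rewrite /vonMangoldt; case: excluded_middle_informative => [H|H]; last exact: Rle_refl.
case: (constructive_indefinite_description _ H) => q [q_pr _] /=.
rewrite -ln_1; apply: ln_le; first lra.
by apply: (le_INR 1); apply/leP; apply: ltnW; apply: prime_gt1.
Qed.

Lemma vonMangoldt_le_ln m : (1 <= m)%coq_nat -> vonMangoldt m <= ln (INR m).
Proof.
move=> m_ge1; rewrite /vonMangoldt; case: excluded_middle_informative => [H|H]; last first.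
  by rewrite -ln_1; apply: ln_le; [lra | apply: (le_INR 1)].
case: (constructive_indefinite_description _ H) => q [q_pr [j [j_ge1 mqj]]] /=.
rewrite mqj; apply: ln_le; first by apply: lt_0_INR; apply/leP; apply: prime_gt0.
apply: le_INR; apply/leP; rewrite -{1}(expn1 q) leq_pexp2l //; first exact: prime_gt0.
by apply/leP.
Qed.

End VonMangoldt.

Lemma ln_le_sub1 y : 0 < y -> ln y <= y - 1.
Proof. intros Hy. pose proof (exp_ineq1_le (ln y)) as He. rewrite exp_ln in He; lra. Qed.

Lemma ln_sub_le a b : 0 < a -> 0 < b -> ln b - ln a <= b / a - 1.
Proof.
  intros Ha Hb. rewrite <- ln_div by assumption. apply ln_le_sub1, Rdiv_lt_0_compat; assumption.
Qed.

Lemma ln_ge0 y : 1 <= y -> 0 <= ln y.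
Proof. intros Hy. rewrite <- ln_1. apply ln_le; lra. Qed.

Lemma ln_ge1 x : 3 <= x -> 1 <= ln x.
Proof. intros Hx. rewrite <- ln_exp with 1. apply ln_le; [apply exp_pos|]. pose proof exp_le_3. lra. Qed.

Lemma ln_INR_mul a b : (1 <= a)%nat -> (1 <= b)%nat -> ln (INR (a * b)) = ln (INR a) + ln (INR b).
Proof.
  intros Ha Hb. pose proof (INR_ge1 a Ha). pose proof (INR_ge1 b Hb).
  rewrite mult_INR. apply ln_mult; lra.
Qed.

Definition quot_gap (x : R) (m : nat) : R :=
  INR (floor_nat (x / INR m)) - INR (floor_nat (x / INR (suc m))).

Lemma S_eq_lsum_quot_gap x : 0 <= x ->
  S x = lsum (seq 1 (floor_nat x)) (fun m => vonMangoldt (m + 1) * quot_gap x m).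
Proof.
  intros Hx.
  exact (lsum_comp_adjoint (floor_nat x) (fun n => floor_nat (x / INR n))
    (fun n m Hn Hm => floor_nat_div_adjoint x n m Hx Hn Hm)
    (fun n Hn => floor_nat_div_le x n Hx Hn)
    (fun n Hn => floor_nat_div_ge1 x n Hx Hn)
    (fun m => vonMangoldt (m + 1))).
Qed.

Lemma quot_gap_ge0 x m : 0 <= x -> (1 <= m)%nat -> 0 <= quot_gap x m.
Proof.
  intros Hx Hm. pose proof (INR_ge1 m Hm). unfold quot_gap.
  enough (Hle : (floor_nat (x / INR (suc m)) <= floor_nat (x / INR m))%nat) by (apply le_INR in Hle; lra).
  apply floor_nat_le_compat. rewrite S_INR. split; [apply Rdiv_le_0_compat; lra|].
  apply Rmult_le_compat_l; [assumption|]. apply Rinv_le_contravar; lra.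
Qed.

Lemma quot_gap_approx x m : 0 <= x -> (1 <= m)%nat ->
  Rabs (quot_gap x m - x / (INR m * INR (suc m))) <= 1.
Proof.
  intros Hx Hm. pose proof (INR_ge1 m Hm). unfold quot_gap.
  replace (x / (INR m * INR (suc m))) with (x / INR m - x / INR (suc m)) by (rewrite S_INR; field; lra).
  destruct (floor_nat_spec (x / INR m)) as [a1 a2]; [apply Rdiv_le_0_compat; lra|].
  destruct (floor_nat_spec (x / INR (suc m))) as [b1 b2]; [rewrite S_INR; apply Rdiv_le_0_compat; lra|].
  apply Rabs_le. lra.
Qed.

Lemma vonMangoldt_succ_le_ln x m : 0 <= x -> (m <= floor_nat x)%nat ->
  vonMangoldt (m + 1) <= ln (x + 1).
Proof.
  intros Hx Hm. eapply Rle_trans; [apply vonMangoldt_le_ln; lia|].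
  apply le_floor_nat in Hm; [|assumption].
  rewrite plus_INR. apply ln_le; simpl; pose proof (pos_INR m); lra.
Qed.

Section TelescopingMajorant.

Variables a h : nat -> R.
Hypothesis a_ge0 : forall k, 0 <= a k.
Hypothesis h_ge0 : forall k, (1 <= k)%nat -> 0 <= h k.
Hypothesis a_le_dh : forall k, (1 <= k)%nat -> a k <= h k - h (suc k).

Lemma sum_n_incr : forall n, sum_n a n <= sum_n a (suc n).
Proof. intros n. rewrite sum_Sn. unfold plus. simpl. pose proof (a_ge0 (suc n)). lra. Qed.

Lemma sum_n_le_mono m n : (m <= n)%nat -> sum_n a m <= sum_n a n.
Proof.
  induction 1 as [|n _ IH]; [apply Rle_refl|]. eapply Rle_trans; [exact IH | apply sum_n_incr].
Qed.

Lemma sum_n_le_majorant n m : sum_n a m <= sum_n a n + h (suc n).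
Proof.
  pose proof (h_ge0 (suc n) ltac:(lia)).
  destruct (Nat.le_gt_cases m n) as [Hmn|Hnm].
  - pose proof (sum_n_le_mono m n Hmn). lra.
  - replace m with (n + (m - n))%nat by lia. generalize (m - n)%nat as j. intros j.
    enough (sum_n a (n + j) <= sum_n a n + h (suc n) - h (suc n + j)) by (pose proof (h_ge0 (suc n + j) ltac:(lia)); lra).
    induction j as [|j IH]; [rewrite !Nat.add_0_r; lra|].
    rewrite Nat.add_succ_r, sum_Sn. unfold plus. simpl.
    pose proof (a_le_dh (suc (n + j)) ltac:(lia)). rewrite Nat.add_succ_r. simpl in *. lra.
Qed.

Lemma series_telescoping_majorant :
  ex_series a /\ forall n, sum_n a n <= Series a <= sum_n a n + h (suc n).
Proof.
  destruct (ex_finite_lim_seq_incr (sum_n a) (sum_n a 0 + h 1) sum_n_incr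
              (sum_n_le_majorant 0)) as [l Hl].
  assert (Hser : is_series a l) by exact Hl.
  split; [exists l; exact Hser|]. intros n. rewrite (is_series_unique a l Hser). split.
  - exact (is_lim_seq_incr_compare (sum_n a) l Hl sum_n_incr n).
  - exact (is_lim_seq_le (sum_n a) (fun _ => sum_n a n + h (suc n)) l _
             (fun m => sum_n_le_majorant n m) Hl (is_lim_seq_const _)).
Qed.

End TelescopingMajorant.

Definition c0_majorant (k : nat) : R := (1 + ln (INR k + 1)) / INR k.

Lemma c0_majorant_ge0 k : (1 <= k)%nat -> 0 <= c0_majorant k.
Proof.
  intros Hk. pose proof (INR_ge1 k Hk). pose proof (ln_ge0 (INR k + 1) ltac:(lra)).
  apply Rdiv_le_0_compat; lra.
Qed.

(* [c0_term] is stated with ssrnat's [addn]; this form uses [Nat.add], which [lia] understands. *)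
Lemma c0_term_eq k : c0_term k = vonMangoldt (k + 2) / (INR (k + 1) * INR (k + 2)).
Proof. reflexivity. Qed.

Lemma c0_term_ge0 k : 0 <= c0_term k.
Proof.
  rewrite c0_term_eq. apply Rdiv_le_0_compat; [apply vonMangoldt_ge0|].
  apply Rmult_lt_0_compat; apply lt_0_INR; lia.
Qed.

(* With a = k the difference of majorants is (1 + ln(a+2) - (a+1)(ln(a+2) - ln(a+1))) / (a(a+1)),
   and ln(a+2) - ln(a+1) <= 1/(a+1). *)
Lemma c0_term_le_majorant_sub k : (1 <= k)%nat -> c0_term k <= c0_majorant k - c0_majorant (suc k).
Proof.
  intros Hk. pose proof (INR_ge1 k Hk) as Ha. rewrite c0_term_eq. unfold c0_majorant.
  rewrite (S_INR k), !plus_INR. set (a := INR k) in *.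
  replace (INR 1) with 1 by reflexivity. replace (INR 2) with 2 by reflexivity.
  replace (a + 1 + 1) with (a + 2) by ring.
  assert (HL : vonMangoldt (k + 2) <= ln (a + 2)).
  { replace (a + 2) with (INR (k + 2)) by (rewrite plus_INR; reflexivity). apply vonMangoldt_le_ln; lia. }
  pose proof (vonMangoldt_ge0 (k + 2)) as HL0.
  pose proof (ln_sub_le (a + 1) (a + 2) ltac:(lra) ltac:(lra)) as Hd.
  replace ((a + 2) / (a + 1) - 1) with (/ (a + 1)) in Hd by (field; lra).
  assert (Hd' : (a + 1) * (ln (a + 2) - ln (a + 1)) <= 1).
  { apply Rmult_le_compat_l with (r := a + 1) in Hd; [|lra]. rewrite Rinv_r in Hd; lra. }
  replace ((1 + ln (a + 1)) / a - (1 + ln (a + 2)) / (a + 1))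
    with ((1 + ln (a + 2) - (a + 1) * (ln (a + 2) - ln (a + 1))) / (a * (a + 1))) by (field; lra).
  apply Rle_trans with (ln (a + 2) / (a * (a + 1))).
  - unfold Rdiv. apply Rmult_le_compat; [lra | left; apply Rinv_0_lt_compat; nra | lra |].
    apply Rinv_le_contravar; nra.
  - unfold Rdiv. apply Rmult_le_compat_r; [left; apply Rinv_0_lt_compat; nra | lra].
Qed.

Lemma c0_series : ex_series c0_term /\
  forall n, sum_n c0_term n <= c0 <= sum_n c0_term n + c0_majorant (suc n).
Proof.
  exact (series_telescoping_majorant c0_term c0_majorant
           c0_term_ge0 c0_majorant_ge0 c0_term_le_majorant_sub).
Qed.

Definition c0_partial (M : nat) : R :=
  lsum (seq 1 M) (fun m => vonMangoldt (m + 1) / (INR m * INR (suc m))).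

Lemma sum_n_c0_term n : sum_n c0_term n = c0_partial (suc n).
Proof.
  rewrite sum_n_lsum. unfold c0_partial. rewrite lsum_seq_shift.
  apply lsum_ext. intros k _. rewrite c0_term_eq.
  replace (k + 2)%nat with (suc (suc k)) by lia. rewrite !Nat.add_1_r. reflexivity.
Qed.

Lemma c0_partial_bounds M : (1 <= M)%nat ->
  c0_partial M <= c0 <= c0_partial M + c0_majorant M.
Proof.
  intros HM. destruct M as [|n]; [lia|]. rewrite <- sum_n_c0_term. apply c0_series.
Qed.

Lemma head_estimate x M : 0 <= x -> (M <= floor_nat x)%nat ->
  Rabs (lsum (seq 1 M) (fun m => vonMangoldt (m + 1) * quot_gap x m) - x * c0_partial M)
  <= INR M * ln (x + 1).
Proof.
  intros Hx HM. unfold c0_partial. rewrite <- lsum_scal, <- lsum_minus.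
  eapply Rle_trans; [apply lsum_abs|].
  replace (INR M * ln (x + 1)) with (lsum (seq 1 M) (fun _ => ln (x + 1)))
    by (rewrite lsum_const, length_seq; reflexivity).
  apply lsum_le.
  intros m Hm. apply in_seq in Hm.
  replace (vonMangoldt (m + 1) * quot_gap x m - x * (vonMangoldt (m + 1) / (INR m * INR (suc m))))
    with (vonMangoldt (m + 1) * (quot_gap x m - x / (INR m * INR (suc m)))) by (unfold Rdiv; ring).
  rewrite Rabs_mult, (Rabs_pos_eq _ (vonMangoldt_ge0 _)), <- (Rmult_1_r (ln (x + 1))).
  apply Rmult_le_compat; [apply vonMangoldt_ge0 | apply Rabs_pos | |].
  - apply vonMangoldt_succ_le_ln; [assumption | lia].
  - apply quot_gap_approx; [assumption | lia].
Qed.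

Lemma tail_estimate x M : 0 <= x -> (M <= floor_nat x)%nat ->
  0 <= lsum (seq (suc M) (floor_nat x - M)) (fun m => vonMangoldt (m + 1) * quot_gap x m)
    <= ln (x + 1) * INR (floor_nat (x / INR (suc M))).
Proof.
  intros Hx HM. split.
  - replace 0 with (lsum (seq (suc M) (floor_nat x - M)) (fun _ => 0)) by (rewrite lsum_const; ring).
    apply lsum_le. intros m Hm. apply in_seq in Hm.
    apply Rmult_le_pos; [apply vonMangoldt_ge0 | apply quot_gap_ge0; [assumption | lia]].
  - apply Rle_trans with (lsum (seq (suc M) (floor_nat x - M)) (fun m => ln (x + 1) * quot_gap x m)).
    + apply lsum_le. intros m Hm. apply in_seq in Hm.
      apply Rmult_le_compat_r; [apply quot_gap_ge0; [assumption | lia] |].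
      apply vonMangoldt_succ_le_ln; [assumption | lia].
    + rewrite lsum_scal. apply Rmult_le_compat_l; [apply ln_ge0; lra |].
      unfold quot_gap. rewrite (lsum_telescope _ _ (fun m => INR (floor_nat (x / INR m)))).
      pose proof (pos_INR (floor_nat (x / INR (suc M + (floor_nat x - M))))). lra.
Qed.

Lemma floor_nat_div_succ_floor_sqrt_le x : 0 <= x ->
  INR (floor_nat (x / INR (suc (floor_nat (sqrt x))))) <= sqrt x.
Proof.
  intros Hx. pose proof (sqrt_pos x) as Hs. set (s := sqrt x) in *.
  assert (Hss : s * s = x) by (apply sqrt_sqrt; lra).
  destruct (floor_nat_spec s Hs) as [_ HM]. rewrite <- S_INR in HM.
  destruct (floor_nat_spec (x / INR (suc (floor_nat s)))) as [Hf _]; [apply Rdiv_le_0_compat; lra|].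
  eapply Rle_trans; [exact Hf|]. apply Rmult_le_reg_r with (INR (suc (floor_nat s))); [lra|].
  unfold Rdiv. rewrite Rmult_assoc, Rinv_l by lra. nra.
Qed.

Lemma S_sub_c0_le x : 4 <= x -> Rabs (S x - c0 * x) <= 10 * sqrt x * ln x.
Proof.
  intros Hx4. assert (Hx : 0 <= x) by lra.
  pose proof (floor_nat_div_succ_floor_sqrt_le x Hx) as Hfl.
  set (s := sqrt x) in *. set (M := floor_nat s) in *.
  assert (Hss : s * s = x) by (apply sqrt_sqrt; lra).
  assert (Hs2 : 2 <= s) by (rewrite <- (sqrt_square 2) by lra; apply sqrt_le_1_alt; lra).
  destruct (floor_nat_spec s ltac:(lra)) as [HM1 HM2]. fold M in HM1, HM2.
  assert (HM : (1 <= M)%nat) by (apply le_floor_nat; simpl; lra).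
  assert (HMx : (M <= floor_nat x)%nat) by (apply floor_nat_le_compat; nra).
  assert (Hlnx : 1 <= ln x) by (apply ln_ge1; lra).
  assert (Hlnx1 : ln (x + 1) <= 2 * ln x).
  { replace (2 * ln x) with (ln (x * x)) by (rewrite ln_mult; lra). apply ln_le; nra. }
  rewrite (S_eq_lsum_quot_gap x Hx).
  replace (floor_nat x) with (M + (floor_nat x - M))%nat at 1 by lia.
  rewrite seq_app, lsum_app. simpl (1 + M)%nat.
  pose proof (head_estimate x M Hx HMx) as Hhead.
  pose proof (tail_estimate x M Hx HMx) as Htail.
  destruct (c0_partial_bounds M HM) as [Hc0l Hc0u].
  assert (Htrunc : x * (c0 - c0_partial M) <= 2 * s * (1 + 2 * ln x)).
  { assert (Hln : ln (INR M + 1) <= ln (x + 1)) by (apply ln_le; nra).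
    apply Rle_trans with (x * c0_majorant M); [apply Rmult_le_compat_l; lra|].
    unfold c0_majorant. replace (x * ((1 + ln (INR M + 1)) / INR M)) with ((1 + ln (INR M + 1)) * (x / INR M))
      by (field; lra).
    rewrite (Rmult_comm (2 * s)).
    apply Rmult_le_compat; [pose proof (ln_ge0 (INR M + 1)); lra | apply Rdiv_le_0_compat; lra | lra |].
    apply Rmult_le_reg_r with (INR M); [lra|]. unfold Rdiv. rewrite Rmult_assoc, Rinv_l by lra. nra. }
  set (A := lsum (seq 1 M) _) in *. set (B := lsum (seq (suc M) _) _) in *.
  assert (Hln0 : 0 <= ln (x + 1)) by (apply ln_ge0; lra).
  assert (HA : INR M * ln (x + 1) <= s * (2 * ln x)) by (apply Rmult_le_compat; [apply pos_INR | lra | lra | lra]).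
  assert (HB : ln (x + 1) * INR (floor_nat (x / INR (suc M))) <= 2 * ln x * s)
    by (apply Rmult_le_compat; [lra | apply pos_INR | lra | lra]).
  assert (HC : 0 <= x * (c0 - c0_partial M)) by (apply Rmult_le_pos; lra).
  assert (Hsln : s <= s * ln x) by nra.
  replace (A + B - c0 * x) with ((A - x * c0_partial M) + B - x * (c0 - c0_partial M)) by ring.
  replace (2 * s * (1 + 2 * ln x)) with (2 * s + 4 * (s * ln x)) in Htrunc by ring.
  replace (10 * s * ln x) with (10 * (s * ln x)) by ring.
  apply Rabs_le_between in Hhead. apply Rabs_le. lra.
Qed.

Definition harmonic_block (a L : nat) : R := lsum (seq a L) (fun i => / INR (suc i)).

Lemma harmonic_block_le_ln a L : (1 <= a)%nat -> harmonic_block a L <= ln (INR (a + L)) - ln (INR a).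
Proof.
  revert a. induction L as [|L IH]; intros a Ha.
  - unfold harmonic_block, lsum. simpl. rewrite Nat.add_0_r. lra.
  - unfold harmonic_block. simpl seq. rewrite lsum_cons. fold (harmonic_block (suc a) L).
    pose proof (IH (suc a) ltac:(lia)) as Hrest. rewrite <- Nat.add_succ_comm.
    pose proof (INR_ge1 a Ha).
    pose proof (ln_sub_le (INR (suc a)) (INR a) ltac:(rewrite S_INR; lra) ltac:(lra)) as Hstep.
    replace (INR a / INR (suc a) - 1) with (- / INR (suc a)) in Hstep by (rewrite S_INR; field; lra).
    lra.
Qed.

Lemma harmonic_block_le_ln_succ a n : (1 <= a)%nat -> (1 <= n)%nat ->
  harmonic_block (a * n) n <= ln (INR (suc a)) - ln (INR a).
Proof.
  intros Ha Hn. pose proof (harmonic_block_le_ln (a * n) n ltac:(nia)) as Hh.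
  replace (a * n + n)%nat with (suc a * n)%nat in Hh by lia.
  rewrite !ln_INR_mul in Hh by lia. lra.
Qed.

Lemma c0_partial_16_ge : 0.7553658 <= c0_partial 16.
Proof.
  pose proof (harmonic_block_le_ln_succ 1 10 ltac:(lia) ltac:(lia)) as h1.
  pose proof (harmonic_block_le_ln_succ 2 10 ltac:(lia) ltac:(lia)) as h2.
  pose proof (harmonic_block_le_ln_succ 4 10 ltac:(lia) ltac:(lia)) as h4.
  pose proof (harmonic_block_le_ln_succ 6 10 ltac:(lia) ltac:(lia)) as h6.
  pose proof (harmonic_block_le_ln_succ 10 10 ltac:(lia) ltac:(lia)) as h10.
  pose proof (harmonic_block_le_ln_succ 12 10 ltac:(lia) ltac:(lia)) as h12.
  pose proof (harmonic_block_le_ln_succ 16 10 ltac:(lia) ltac:(lia)) as h16.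
  assert (e1 : ln (INR 1) = 0) by apply ln_1.
  assert (e4 : ln (INR 4) = ln (INR 2) + ln (INR 2)) by exact (ln_INR_mul 2 2 ltac:(lia) ltac:(lia)).
  assert (e6 : ln (INR 6) = ln (INR 2) + ln (INR 3)) by exact (ln_INR_mul 2 3 ltac:(lia) ltac:(lia)).
  assert (e10 : ln (INR 10) = ln (INR 2) + ln (INR 5)) by exact (ln_INR_mul 2 5 ltac:(lia) ltac:(lia)).
  assert (e12 : ln (INR 12) = ln (INR 4) + ln (INR 3)) by exact (ln_INR_mul 4 3 ltac:(lia) ltac:(lia)).
  assert (e16 : ln (INR 16) = ln (INR 4) + ln (INR 4)) by exact (ln_INR_mul 4 4 ltac:(lia) ltac:(lia)).
  unfold c0_partial, harmonic_block, lsum in *. cbn [seq map fold_right Nat.add Nat.mul] in *.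
  assert (v2 : vonMangoldt 2 = ln (INR 2)) by exact (vonMangoldt_prime_pow 2 1 eq_refl eq_refl).
  assert (v3 : vonMangoldt 3 = ln (INR 3)) by exact (vonMangoldt_prime_pow 3 1 eq_refl eq_refl).
  assert (v4 : vonMangoldt 4 = ln (INR 2)) by exact (vonMangoldt_prime_pow 2 2 eq_refl eq_refl).
  assert (v5 : vonMangoldt 5 = ln (INR 5)) by exact (vonMangoldt_prime_pow 5 1 eq_refl eq_refl).
  assert (v7 : vonMangoldt 7 = ln (INR 7)) by exact (vonMangoldt_prime_pow 7 1 eq_refl eq_refl).
  assert (v8 : vonMangoldt 8 = ln (INR 2)) by exact (vonMangoldt_prime_pow 2 3 eq_refl eq_refl).
  assert (v9 : vonMangoldt 9 = ln (INR 3)) by exact (vonMangoldt_prime_pow 3 2 eq_refl eq_refl).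
  assert (v11 : vonMangoldt 11 = ln (INR 11)) by exact (vonMangoldt_prime_pow 11 1 eq_refl eq_refl).
  assert (v13 : vonMangoldt 13 = ln (INR 13)) by exact (vonMangoldt_prime_pow 13 1 eq_refl eq_refl).
  assert (v16 : vonMangoldt 16 = ln (INR 2)) by exact (vonMangoldt_prime_pow 2 4 eq_refl eq_refl).
  assert (v17 : vonMangoldt 17 = ln (INR 17)) by exact (vonMangoldt_prime_pow 17 1 eq_refl eq_refl).
  rewrite v2, v3, v4, v5, v7, v8, v9, v11, v13, v16, v17.
  pose proof (vonMangoldt_ge0 6).
  pose proof (vonMangoldt_ge0 10).
  pose proof (vonMangoldt_ge0 12).
  pose proof (vonMangoldt_ge0 14).
  pose proof (vonMangoldt_ge0 15).
  rewrite !INR_IZR_INZ in *. simpl Z.of_nat in *.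
  lra.
Qed.

Theorem theorem1p1 :
  ex_series c0_term /\ c0 >= 0.7553658 /\
  forall eps : R, 0 < eps ->
    exists C X0 : R, forall x : R, X0 <= x ->
      Rabs (S x - c0 * x) <= C * Rpower x ((2 + eps) / 3) * (ln x) ^ 2.
Proof.
  split; [apply c0_series|]. split.
  { pose proof c0_partial_16_ge. pose proof (c0_partial_bounds 16 ltac:(lia)). lra. }
  intros eps Heps. exists 10, 4. intros x Hx.
  eapply Rle_trans; [apply S_sub_c0_le; exact Hx|].
  assert (Hlnx : 1 <= ln x) by (apply ln_ge1; lra).
  assert (Hsqrt : sqrt x <= Rpower x ((2 + eps) / 3)).
  { rewrite <- Rpower_sqrt by lra. apply Rle_Rpower; lra. }
  pose proof (sqrt_pos x).
  replace (10 * sqrt x * ln x) with (10 * (sqrt x * ln x)) by ring.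
  replace (10 * Rpower x ((2 + eps) / 3) * ln x ^ 2)
    with (10 * (Rpower x ((2 + eps) / 3) * ln x ^ 2)) by ring.
  apply Rmult_le_compat_l; [lra|]. apply Rmult_le_compat; [lra | lra | exact Hsqrt | simpl; nra].
Qed.
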